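(* Assume the standing assumptions below, and write $\mathbf{x}^*(\mathbf{a})\in\mathbb{R}^{2n}$ for the unique solution of the fixed-point equation $\mathbf{x}=\mathbf{g}(\mathbf{a},\mathbf{x})$. For $\boldsymbol{\xi}\in\{0,1\}^n$ define the $2n\times 2n$ matrix $$\mathbf{K}_{\boldsymbol{\xi}}=\begin{pmatrix}\operatorname{diag}(\boldsymbol{\xi})\mathbf{M}^s & \operatorname{diag}(\boldsymbol{\xi})\mathbf{M}^d\\ \operatorname{diag}(\mathbf{1}-\boldsymbol{\xi})\mathbf{M}^s & \operatorname{diag}(\mathbf{1}-\boldsymbol{\xi})\mathbf{M}^d\end{pmatrix}.$$ Then the following hold. 1. $\kappa:=\max_{\boldsymbol{\xi}\in\{0,1\}^n}\|\mathbf{K}_{\boldsymbol{\xi}}\|_1<1$. 2. For all $\mathbf{a}_1,\mathbf{a}_2\in(0,\infty)^n$, $$\|\mathbf{x}^*(\mathbf{a}_1)-\mathbf{x}^*(\mathbf{a}_2)\|_1\le (1-\kappa)^{-1}\,\|\mathbf{a}_1-\mathbf{a}_2\|_1.$$ Here $\|\cdot\|_1$ is the $\ell^1$ norm on vectors, and for matrices it is the induced operator norm, i.e. the maximum absolute column sum.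
   Context: Standing model (network valuation with cross-holdings). There are $n$ firms. Cross-holding matrices. $\mathbf{M}^s,\mathbf{M}^d\in\mathbb{R}^{n\times n}$ are matrices of equity and debt cross-holding fractions: firm $i$ holds fraction $M^s_{ij}$ of firm $j$'s equity and fraction $M^d_{ij}$ of firm $j$'s debt. They satisfy: - $M^s_{ii}=M^d_{ii}=0$ for all $i$; - $M^s_{ij},M^d_{ij}\ge 0$ for all $i,j$; - $\sum_i M^s_{ij}<1$ and $\sum_i M^d_{ij}<1$ for every $j$. Asset and debt data. Firm $i$ has external asset value $a_i>0$ and nominal debt $d_i>0$ (fixed). Fixed-point map. For $\mathbf{x}=(\mathbf{s};\mathbf{r})\in\mathbb{R}^{2n}$ (equity values $\mathbf{s}$ stacked over debt recovery values $\mathbf{r}$), define $\mathbf{g}=(g^s_1,\dots,g^s_n,g^r_1,\dots,g^r_n)$ by $$g^s_i(\mathbf{a},\mathbf{x})=\max\Big\{0,\;a_i+\sum_j M^s_{ij}s_j+\sum_j M^d_{ij}r_j-d_i\Big\},$$ $$g^r_i(\mathbf{a},\mathbf{x})=\min\Big\{d_i,\;a_i+\sum_j M^s_{ij}s_j+\sum_j M^d_{ij}r_j\Big\}.$$ For every $\mathbf{a}\in(0,\infty)^n$ the equation $\mathbf{x}=\mathbf{g}(\mathbf{a},\mathbf{x})$ has a unique (nonnegative) solution, denoted $\mathbf{x}^*(\mathbf{a})=(\mathbf{s}^*(\mathbf{a});\mathbf{r}^*(\mathbf{a}))$. *)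

From HB Require Import structures.
From mathcomp Require Import all_boot all_order all_algebra.
From mathcomp Require Import reals.
Set Implicit Arguments. Unset Strict Implicit. Unset Printing Implicit Defensive.
Import Order.TTheory GRing.Theory Num.Theory.
Local Open Scope ring_scope.

Section Defs.
Variables (R : realType) (n : nat).

Definition vnorm1 (m : nat) (v : 'cV[R]_m) : R := \sum_(i < m) `|v i 0|.

Definition mnorm1 (p q : nat) (A : 'M[R]_(p, q)) : R :=
  \big[Num.max/0]_(j < q) \sum_(i < p) `|A i j|.

(* diag(xi) for xi in {0,1}^n, encoded as a boolean vector *)
Definition diag01 (xi : {ffun 'I_n -> bool}) : 'M[R]_n :=
  diag_mx (\row_i ((xi i)%:R : R)).
Definition diag01c (xi : {ffun 'I_n -> bool}) : 'M[R]_n :=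
  diag_mx (\row_i (1 - (xi i)%:R : R)).

Definition Kxi (Ms Md : 'M[R]_n) (xi : {ffun 'I_n -> bool}) : 'M[R]_(n + n) :=
  block_mx (diag01 xi *m Ms) (diag01 xi *m Md)
           (diag01c xi *m Ms) (diag01c xi *m Md).

Definition kappa (Ms Md : 'M[R]_n) : R :=
  \big[Num.max/0]_(xi : {ffun 'I_n -> bool}) mnorm1 (Kxi Ms Md xi).

(* the fixed-point map g(a, x), x = (s; r) stacked *)
Definition gmap (Ms Md : 'M[R]_n) (d a : 'cV[R]_n) (x : 'cV[R]_(n + n))
  : 'cV[R]_(n + n) :=
  let s := usubmx x in
  let r := dsubmx x in
  let z := a + Ms *m s + Md *m r in
  col_mx (\col_i Num.max 0 (z i 0 - d i 0)) (\col_i Num.min (d i 0) (z i 0)).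

End Defs.

From HB Require Import structures.
From mathcomp Require Import all_boot all_order all_algebra.
From mathcomp Require Import reals.
From mathcomp Require Import lra.
Import Order.TTheory GRing.Theory Num.Theory.
Set Implicit Arguments.
Unset Strict Implicit.
Unset Printing Implicit Defensive.

Local Open Scope ring_scope.

(* Row i of [K_xi] lies entirely in the upper or entirely in the lower block,
   so every [K_xi] has the same absolute column sums as the block row
   [(Ms Md)]: [kappa] is the largest column sum of [Ms] and [Md], hence < 1.
   The map [g] depends on [x] only through the asset values
   [z = a + Ms s + Md r] and splits each [z_i] into the two nondecreasing
   parts [max(0, z_i - d_i)] and [min(d_i, z_i)], so
   [|g(a1,x1) - g(a2,x2)|_1 <= |z1 - z2|_1 <= |a1 - a2|_1 + kappa |x1 - x2|_1];
   at fixed points this rearranges into the claimed bound. *)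

Section L1Norm.
Variable R : realType.

Lemma vnorm1_ge0 m (v : 'cV[R]_m) : 0 <= vnorm1 v.
Proof. by apply: sumr_ge0 => i _. Qed.

Lemma vnorm1D_le m (u v : 'cV[R]_m) : vnorm1 (u + v) <= vnorm1 u + vnorm1 v.
Proof. by rewrite -big_split; apply: ler_sum => i _; rewrite mxE ler_normD. Qed.

Lemma vnorm1_col_mx m1 m2 (u : 'cV[R]_m1) (v : 'cV[R]_m2) :
  vnorm1 (col_mx u v) = vnorm1 u + vnorm1 v.
Proof.
by rewrite /vnorm1 big_split_ord /=; congr (_ + _); apply: eq_bigr => i _;
  rewrite ?col_mxEu ?col_mxEd.
Qed.

Lemma vnorm1_submx m1 m2 (x : 'cV[R]_(m1 + m2)) :
  vnorm1 x = vnorm1 (usubmx x) + vnorm1 (dsubmx x).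
Proof. by rewrite -vnorm1_col_mx vsubmxK. Qed.

Lemma le_mnorm1 p q (A : 'M[R]_(p, q)) j : \sum_(i < p) `|A i j| <= mnorm1 A.
Proof. exact: (le_bigmax _ (fun j => \sum_(i < p) `|A i j|)). Qed.

Lemma mnorm1_ge0 p q (A : 'M[R]_(p, q)) : 0 <= mnorm1 A.
Proof. by apply: bigmax_ge_id. Qed.

Lemma vnorm1_mulmx_le p q (A : 'M[R]_(p, q)) (v : 'cV[R]_q) :
  vnorm1 (A *m v) <= mnorm1 A * vnorm1 v.
Proof.
rewrite /vnorm1 mulr_sumr.
under eq_bigr do rewrite mxE.
apply: le_trans (ler_sum _ (fun i _ => ler_norm_sum _ _ _)) _.
rewrite exchange_big /=; apply: ler_sum => j _.
under eq_bigr do rewrite normrM.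
by rewrite -mulr_suml ler_wpM2r ?le_mnorm1.
Qed.

End L1Norm.

Lemma dist_excess_cap_le (R : realType) (u v c : R) :
  `|Num.max 0 (u - c) - Num.max 0 (v - c)| + `|Num.min c u - Num.min c v|
  <= `|u - v|.
Proof.
wlog le_vu : u v / v <= u.
  move=> H; have [/H //|/ltW /H] := leP v u.
  by rewrite [`|u - v|]distrC [`|Num.max 0 (u - c) - _|]distrC
    [`|Num.min c u - _|]distrC.
have split_sum w : Num.max 0 (w - c) + Num.min c w = w.
  by case: (lerP w c) => h; [rewrite max_l ?min_r | rewrite max_r ?min_l]; lra.
rewrite !ger0_norm ?subr_ge0 ?le_min2 ?le_max2 ?lerB //.
by have := split_sum u; have := split_sum v; lra.
Qed.

Lemma norm_bool_split (R : realType) (b : bool) (x : R) :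
  `|b%:R * x| + `|(1 - b%:R) * x| = `|x|.
Proof. by case: b; rewrite /= ?subrr ?subr0 !(mul0r, mul1r) normr0 ?addr0 ?add0r. Qed.

Section CrossHoldings.
Variables (R : realType) (n : nat) (Ms Md : 'M[R]_n).

Lemma colsum_Kxi_lshift xi (j : 'I_n) :
  \sum_(i < n + n) `|Kxi Ms Md xi i (lshift n j)| = \sum_(i < n) `|Ms i j|.
Proof.
rewrite big_split_ord /= -big_split; apply: eq_bigr => i _.
by rewrite /Kxi block_mxEul block_mxEdl !mul_diag_mx !mxE; exact: norm_bool_split.
Qed.

Lemma colsum_Kxi_rshift xi (j : 'I_n) :
  \sum_(i < n + n) `|Kxi Ms Md xi i (rshift n j)| = \sum_(i < n) `|Md i j|.
Proof.
rewrite big_split_ord /= -big_split; apply: eq_bigr => i _.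
by rewrite /Kxi block_mxEur block_mxEdr !mul_diag_mx !mxE; exact: norm_bool_split.
Qed.

Lemma mnorm1_le_kappa : mnorm1 Ms <= kappa Ms Md /\ mnorm1 Md <= kappa Ms Md.
Proof.
pose xi0 : {ffun 'I_n -> bool} := [ffun=> true].
have le_K : mnorm1 (Kxi Ms Md xi0) <= kappa Ms Md.
  exact: (le_bigmax _ (fun xi => mnorm1 (Kxi Ms Md xi))).
by split; apply: le_trans le_K; apply: bigmax_le => [|j _];
  rewrite ?mnorm1_ge0 // -?(colsum_Kxi_lshift xi0) -?(colsum_Kxi_rshift xi0)
    le_mnorm1.
Qed.

Lemma kappa_lt1 :
  (forall i j, 0 <= Ms i j) -> (forall i j, 0 <= Md i j) ->
  (forall j, \sum_(i < n) Ms i j < 1) -> (forall j, \sum_(i < n) Md i j < 1) ->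
  kappa Ms Md < 1.
Proof.
move=> Ms_ge0 Md_ge0 Ms_col Md_col.
apply: bigmax_lt => // xi _; apply: bigmax_lt => // j _.
rewrite -(splitK j); case: (split j) => k /=.
- by rewrite colsum_Kxi_lshift; under eq_bigr do rewrite ger0_norm //.
- by rewrite colsum_Kxi_rshift; under eq_bigr do rewrite ger0_norm //.
Qed.

Definition asset_value (a : 'cV[R]_n) (x : 'cV[R]_(n + n)) : 'cV[R]_n :=
  a + Ms *m usubmx x + Md *m dsubmx x.

Lemma asset_valueB a1 a2 x1 x2 :
  asset_value a1 x1 - asset_value a2 x2 =
  (a1 - a2) + Ms *m usubmx (x1 - x2) + Md *m dsubmx (x1 - x2).
Proof. by rewrite /asset_value !linearB /= !opprD addrACA [X in X + _]addrACA. Qed.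

Lemma vnorm1_gmapB_le d a1 a2 x1 x2 :
  vnorm1 (gmap Ms Md d a1 x1 - gmap Ms Md d a2 x2)
  <= vnorm1 (asset_value a1 x1 - asset_value a2 x2).
Proof.
rewrite /gmap opp_col_mx add_col_mx vnorm1_col_mx -big_split /=.
by apply: ler_sum => i _; rewrite !mxE; exact: dist_excess_cap_le.
Qed.

Lemma vnorm1_gmapB_contract d a1 a2 x1 x2 :
  vnorm1 (gmap Ms Md d a1 x1 - gmap Ms Md d a2 x2)
  <= vnorm1 (a1 - a2) + kappa Ms Md * vnorm1 (x1 - x2).
Proof.
have [Ms_le Md_le] := mnorm1_le_kappa.
apply: le_trans (vnorm1_gmapB_le _ _ _ _ _) _.
rewrite asset_valueB [vnorm1 (x1 - x2)]vnorm1_submx mulrDr -addrA.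
apply: le_trans (vnorm1D_le _ _) _; rewrite lerD2l.
apply: le_trans (vnorm1D_le _ _) _; apply: lerD;
  apply: le_trans (vnorm1_mulmx_le _ _) _; by rewrite ler_wpM2r ?vnorm1_ge0.
Qed.

End CrossHoldings.

Theorem mainTheorem1 (R : realType) (n : nat) (Ms Md : 'M[R]_n) (d : 'cV[R]_n)
  (hMs_diag : forall i, Ms i i = 0) (hMd_diag : forall i, Md i i = 0)
  (hMs_nn : forall i j, 0 <= Ms i j) (hMd_nn : forall i j, 0 <= Md i j)
  (hMs_col : forall j, \sum_(i < n) Ms i j < 1)
  (hMd_col : forall j, \sum_(i < n) Md i j < 1)
  (hd : forall i, 0 < d i 0) :
  kappa Ms Md < 1 /\
  (forall (a1 a2 : 'cV[R]_n) (x1 x2 : 'cV[R]_(n + n)),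
     (forall i, 0 < a1 i 0) -> (forall i, 0 < a2 i 0) ->
     x1 = gmap Ms Md d a1 x1 -> x2 = gmap Ms Md d a2 x2 ->
     vnorm1 (x1 - x2) <= (1 - kappa Ms Md)^-1 * vnorm1 (a1 - a2)).
Proof.
have kappa_lt1 := kappa_lt1 hMs_nn hMd_nn hMs_col hMd_col.
split=> // a1 a2 x1 x2 _ _ fix1 fix2.
have := vnorm1_gmapB_contract Ms Md d a1 a2 x1 x2; rewrite -fix1 -fix2.
rewrite ler_pdivlMl ?subr_gt0 //; lra.
Qed.
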